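(* Let $a_1,\dots,a_n\in\mathbb{D}$ be distinct, $n\ge 2$, with $B_l(z)=\prod_{j=1}^l\frac{z-a_j}{1-\bar a_jz}$ and $k_j(z)=\frac1{1-\bar a_jz}$. Let $A$ be a linear operator on $K^2_{B_n}$ with matrix representation $(b^{(n)}_{i,j})_{i,j=1,\dots,n}$ with respect to $\{k_1,\dots,k_n\}$, i.e. $Ak_j=\sum_{m=1}^n b^{(n)}_{m,j}k_m$. Let $P_{n-1}$ be the orthogonal projection of $K^2_{B_n}$ onto $K^2_{B_{n-1}}$. Then $A_{n-1}=P_{n-1}A|_{K^2_{B_{n-1}}}$ has matrix representation $(b^{(n-1)}_{i,j})_{i,j=1,\dots,n-1}$ with respect to $\{k_1,\dots,k_{n-1}\}$ given by $$b^{(n-1)}_{i,j}=b^{(n)}_{i,j}+\frac{\overline{B_{n-1}(a_n)}\,b^{(n)}_{n,j}}{\overline{B_{n-1}'(a_i)}(\bar a_n-\bar a_i)}.$$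
   Context: $K^2_\theta=H^2\ominus\theta H^2$ for inner $\theta$; $\{k_1,\dots,k_l\}$ is a basis of $K^2_{B_l}$ and $K^2_{B_{n-1}}\subset K^2_{B_n}$. *)

(* Complex numbers: an arbitrary numClosedFieldType C
   (C = the complex numbers is an instance; algC is another). *)
From HB Require Import structures.
From mathcomp Require Import all_boot all_order all_algebra.
Set Implicit Arguments. Unset Strict Implicit. Unset Printing Implicit Defensive.
Import Order.TTheory GRing.Theory Num.Theory.
Local Open Scope ring_scope.

(* Points are indexed from 0: a 0, ..., a (n-1) correspond to a_1, ..., a_n. *)

Definition kfun (C : numClosedFieldType) (a : nat -> C) (j : nat) (z : C) : C :=
  (1 - (a j)^* * z)^-1.

(* H^2 inner product of kernels: <k_j, k_i> = k_j(a_i) (reproducing property). *)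
Definition gram (C : numClosedFieldType) (a : nat -> C) (i j : nat) : C :=
  kfun a j (a i).

(* H^2 inner product of f = sum_{m<n} c_m k_m and g = sum_{i<n} d_i k_i,
   computed through the coordinates. *)
Definition kip (C : numClosedFieldType) (a : nat -> C) (n : nat)
    (c d : nat -> C) : C :=
  \sum_(i < n) \sum_(m < n) c m * (d i)^* * gram a i m.

Definition kdelta (C : numClosedFieldType) (i : nat) : nat -> C :=
  fun m => (m == i)%:R.

(* g (coordinates) is the orthogonal projection of f (coordinates, an
   element of K^2_{B_n} = span{k_0..k_{n-1}}) onto span{k_0,...,k_{l-1}}:
   g lies in that span and f - g is orthogonal to each k_i, i < l. *)
Definition orth_proj_coords (C : numClosedFieldType) (a : nat -> C) (n l : nat)
    (f g : nat -> C) : Prop :=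
  (forall m, (l <= m)%N -> g m = 0) /\
  (forall i, (i < l)%N -> kip a n (fun m => f m - g m) (kdelta C i) = 0).

Definition Bnum (C : numClosedFieldType) (a : nat -> C) (l : nat) : {poly C} :=
  \prod_(j < l) ('X - (a j)%:P).
Definition Bden (C : numClosedFieldType) (a : nat -> C) (l : nat) : {poly C} :=
  \prod_(j < l) (1 - ((a j)^*)%:P * 'X).
Definition Beval (C : numClosedFieldType) (a : nat -> C) (l : nat) (z : C) : C :=
  (Bnum a l).[z] / (Bden a l).[z].
Definition Bder (C : numClosedFieldType) (a : nat -> C) (l : nat) (z : C) : C :=
  ((Bnum a l)^`().[z] * (Bden a l).[z] - (Bnum a l).[z] * (Bden a l)^`().[z])
    / ((Bden a l).[z] ^+ 2).

(* Since A k_j - P_{n-1} A k_j only involves the component b_{n,j} k_n,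
   everything reduces to projecting k_n: one checks that k_n - sum_{m<n} c_m k_m
   is orthogonal to every k_i, i < n, where
     c_m = conj(B(a_n)) / (conj(B'(a_m)) (conj a_n - conj a_m)),  B = B_{n-1}.
   After conjugation this is the identity
     sum_m B(l) / (B'(a_m) (l - a_m)) * 1 / (1 - a_m w) = 1 / (1 - l w),
   with l = a_n and w = conj a_i.  Writing B = Bnum / Bden, the m-th coefficient
   is the m-th Lagrange basis polynomial at l times Bden(a_m) / Bden(l), and
   since 1 - w z is a factor of Bden, the identity is Lagrange interpolation of
   the polynomial Bden(z) / (1 - w z), of degree < n-1, at a_1, ..., a_{n-1}. *)

From HB Require Import structures.
From mathcomp Require Import all_boot all_order all_algebra ring zify.
Import Order.TTheory GRing.Theory Num.Theory.
Set Implicit Arguments. Unset Strict Implicit. Unset Printing Implicit Defensive.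
Local Open Scope ring_scope.

Lemma size_prod_neq_leq (R : nzSemiRingType) (N : nat) (m : 'I_N)
    (F : 'I_N -> {poly R}) :
  (forall j, (size (F j) <= 2)%N) -> (size (\prod_(j < N | j != m) F j)%R <= N)%N.
Proof.
move=> sF; apply: leq_trans (size_poly_prod_leq _ _) _.
have sum_le : (\sum_(j < N | j != m) size (F j) <= \sum_(j < N | j != m) 2)%N.
  exact: leq_sum.
move: sum_le; rewrite sum_nat_const cardC1 card_ord.
have := ltn_ord m; set s := (\sum_(_ < _ | _) _)%N; lia.
Qed.

Section LagrangeInterpolation.

Variables (K : fieldType) (N : nat) (x : nat -> K).
Hypothesis x_inj : forall i j, (i < N)%N -> (j < N)%N -> x i = x j -> i = j.

Definition lagrange_num (m : 'I_N) : {poly K} :=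
  \prod_(j < N | j != m) ('X - (x j)%:P).

Lemma lagrange_num_root (m k : 'I_N) : m != k -> (lagrange_num m).[x k] = 0.
Proof.
by move=> mk; rewrite horner_prod (bigD1 k) 1?eq_sym //= hornerXsubC subrr mul0r.
Qed.

Lemma lagrange_num_node_neq0 (m : 'I_N) : (lagrange_num m).[x m] != 0.
Proof.
rewrite horner_prod; apply/prodf_neq0 => j jm.
rewrite hornerXsubC subr_eq0; apply: contra jm => /eqP /x_inj x_mj.
by apply/eqP/val_inj; rewrite /= x_mj.
Qed.

Lemma size_lagrange_num (m : 'I_N) : (size (lagrange_num m) <= N)%N.
Proof. by apply: size_prod_neq_leq => j; rewrite size_XsubC. Qed.

Lemma lagrange_interpolation (r : {poly K}) (z : K) : (size r <= N)%N ->
  r.[z] = \sum_(m < N) r.[x m] / (lagrange_num m).[x m] * (lagrange_num m).[z].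
Proof.
move=> sr.
pose q := \sum_(m < N) (r.[x m] / (lagrange_num m).[x m]) *: lagrange_num m.
suff r_eq : r = q.
  by rewrite {1}r_eq horner_sum; apply: eq_bigr => m _; rewrite hornerZ.
apply/eqP; rewrite -subr_eq0; apply/eqP.
apply: (@roots_geq_poly_eq0 _ _ [seq x (val k) | k <- enum 'I_N]).
- apply/allP => _ /mapP [k _ ->]; rewrite /root !hornerE horner_sum.
  rewrite (bigD1 k) //= big1 => [|m mk]; last first.
    by rewrite hornerZ (lagrange_num_root mk) mulr0.
  by rewrite hornerZ mulfVK ?lagrange_num_node_neq0 // addr0 subrr.
- rewrite map_inj_uniq ?enum_uniq // => k l /x_inj x_kl.
  exact: val_inj (x_kl (ltn_ord k) (ltn_ord l)).
- rewrite size_map size_enum_ord; apply: leq_trans (size_polyD _ _) _.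
  rewrite size_polyN geq_max sr /=; apply: leq_trans (size_sum _ _ _) _.
  apply/bigmax_leqP => m _; apply: leq_trans (size_scale_leq _ _) _.
  exact: size_lagrange_num.
Qed.

End LagrangeInterpolation.

Lemma one_sub_mul_neq0 (R : numDomainType) (c z : R) :
  `|c| < 1 -> `|z| < 1 -> 1 - c * z != 0.
Proof.
move=> c_lt1 z_lt1; rewrite subr_eq0; apply/eqP => one_eq.
have : `|c * z| < 1 by rewrite normrM -(mulr1 1) ltr_pM.
by rewrite -one_eq normr1 ltxx.
Qed.

Lemma size_one_sub_CX (R : nzRingType) (c : R) : (size (1 - c%:P * 'X)%R <= 2)%N.
Proof.
rewrite -mulNr -polyCN addrC -polyC1 size_MXaddC.
by case: ifP => // _; apply: size_polyC_leq1.
Qed.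

Section Blaschke.

Variables (C : numClosedFieldType) (a : nat -> C) (N : nat).
Hypothesis a_disc : forall k, (k < N)%N -> `|a k| < 1.
Hypothesis a_inj : forall k l, (k < N)%N -> (l < N)%N -> a k = a l -> k = l.

Lemma Bden_neq0 (z : C) : `|z| < 1 -> (Bden a N).[z] != 0.
Proof.
move=> z_lt1; rewrite horner_prod; apply/prodf_neq0 => j _.
by rewrite !hornerE one_sub_mul_neq0 // norm_conjC a_disc.
Qed.

Lemma Bnum_node (m : 'I_N) : Bnum a N = ('X - (a m)%:P) * lagrange_num a m.
Proof. by rewrite /Bnum (bigD1 m). Qed.

Lemma Bder_node (m : 'I_N) :
  Bder a N (a m) = (lagrange_num a m).[a m] / (Bden a N).[a m].
Proof.
have Bden_m := Bden_neq0 (a_disc (ltn_ord m)).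
rewrite /Bder (Bnum_node m) derivM derivXsubC !hornerE subrr.
by field.
Qed.

Lemma Beval_div_Bder_node (m : 'I_N) (l : C) : `|l| < 1 -> l != a m ->
  Beval a N l / (Bder a N (a m) * (l - a m)) =
    (lagrange_num a m).[l] / (lagrange_num a m).[a m]
      * ((Bden a N).[a m] / (Bden a N).[l]).
Proof.
move=> l_lt1 l_neq.
have Bden_m := Bden_neq0 (a_disc (ltn_ord m)).
have Bden_l := Bden_neq0 l_lt1.
have num_m := lagrange_num_node_neq0 a_inj m.
have l_sub : l - a m != 0 by rewrite subr_eq0.
rewrite Bder_node /Beval (Bnum_node m) hornerM hornerXsubC.
by field; rewrite Bden_m Bden_l num_m l_sub.
Qed.

Lemma Blaschke_kernel_sum (i : 'I_N) (l : C) :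
  `|l| < 1 -> (forall m : 'I_N, l != a m) ->
  \sum_(m < N) Beval a N l / (Bder a N (a m) * (l - a m))
      * (1 - a m * (a i)^*)^-1 = (1 - l * (a i)^*)^-1.
Proof.
move=> l_lt1 l_neq; set w := (a i)^*.
pose r := \prod_(j < N | j != i) (1 - ((a j)^*)%:P * 'X).
have Bden_factor z : (Bden a N).[z] = (1 - z * w) * r.[z].
  by rewrite /Bden (bigD1 i) //= hornerM !hornerE [z * w]mulrC.
have w_lt1 : `|w| < 1 by rewrite norm_conjC a_disc.
have one_sub_neq0 z : `|z| < 1 -> 1 - z * w != 0.
  by move=> z_lt1; rewrite mulrC one_sub_mul_neq0.
have r_neq0 z : `|z| < 1 -> r.[z] != 0.
  by move=> /Bden_neq0; rewrite Bden_factor mulf_eq0 negb_or => /andP[].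
have size_r : (size r <= N)%N.
  by apply: size_prod_neq_leq => j; apply: size_one_sub_CX.
have -> : (1 - l * w)^-1 = r.[l] / (Bden a N).[l].
  by rewrite Bden_factor; field; rewrite one_sub_neq0 ?r_neq0.
rewrite (lagrange_interpolation a_inj _ size_r) mulr_suml; apply: eq_bigr => m _.
have a_m := a_disc (ltn_ord m).
rewrite Beval_div_Bder_node // !Bden_factor.
by field; rewrite r_neq0 // !one_sub_neq0 // (lagrange_num_node_neq0 a_inj).
Qed.

Lemma kfun_expansion (i : 'I_N) (l : C) :
  `|l| < 1 -> (forall m : 'I_N, l != a m) ->
  (1 - l^* * a i)^-1 = \sum_(m < N) (Beval a N l)^*
      / ((Bder a N (a m))^* * (l^* - (a m)^*)) * kfun a m (a i).
Proof.
move=> l_lt1 l_neq.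
have -> : (1 - l^* * a i)^-1 = ((1 - l * (a i)^*)^-1)^*.
  by rewrite fmorphV rmorphB rmorph1 rmorphM /= conjCK.
rewrite -(Blaschke_kernel_sum i l_lt1 l_neq) rmorph_sum; apply: eq_bigr => m _.
by rewrite /kfun !(rmorphM, fmorphV, rmorphB, rmorph1) /= conjCK mulrC.
Qed.

End Blaschke.

Lemma kip_kdelta (C : numClosedFieldType) (a : nat -> C) (n : nat) (c : nat -> C)
    (i : nat) :
  (i < n)%N -> kip a n c (kdelta C i) = \sum_(m < n) c m * gram a i m.
Proof.
move=> lt_in; rewrite /kip (bigD1 (Ordinal lt_in)) //= [X in _ + X]big1 => [|k].
  rewrite addr0.
  by apply: eq_bigr => m _; rewrite /kdelta eqxx conjC1 mulr1.
rewrite -val_eqE /= => /negbTE neq_ki.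
by apply: big1 => m _; rewrite /kdelta neq_ki conjC0 mulr0 mul0r.
Qed.

Theorem lemma4p5 (C : numClosedFieldType) (n : nat) (a : nat -> C)
    (b : nat -> nat -> C) :
  (2 <= n)%N ->
  (forall i, (i < n)%N -> `|a i| < 1) ->
  (forall i j, (i < n)%N -> (j < n)%N -> a i = a j -> i = j) ->
  forall j, (j < n.-1)%N ->
    orth_proj_coords a n n.-1 (fun m => b m j)
      (fun i => if (i < n.-1)%N then
                  b i j + (Beval a n.-1 (a n.-1))^* * b n.-1 j
                          / ((Bder a n.-1 (a i))^* * ((a n.-1)^* - (a i)^*))
                else 0).
Proof.
case: n => [//|N] _ a_disc a_inj j _ /=.
split=> [m le_Nm | i lt_iN]; first by rewrite ltnNge le_Nm.
have a_discN k : (k < N)%N -> `|a k| < 1 by move=> lt_kN; apply/a_disc/ltnW.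
have a_injN k l : (k < N)%N -> (l < N)%N -> a k = a l -> k = l.
  by move=> lt_kN lt_lN; apply: a_inj; apply: ltnW.
have aN_neq (m : 'I_N) : a N != a m.
  apply/eqP => /(a_inj _ _ (ltnSn N) (ltnW (ltn_ord m))) eq_Nm.
  by have := ltn_ord m; rewrite -eq_Nm ltnn.
have expansion :=
  kfun_expansion a_discN a_injN (Ordinal lt_iN) (a_disc N (ltnSn N)) aN_neq.
rewrite kip_kdelta; last exact: ltnW.
rewrite big_ord_recr /= ltnn subr0.
rewrite [gram a i N]/gram [kfun a N _]/kfun expansion.
rewrite mulr_sumr -big_split /=; apply: big1 => m _.
by rewrite ltn_ord /gram; ring.
Qed.
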